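(* Let $E,F$ be Banach spaces over $\mathbb{K}$ and $m,n,k\in\mathbb{N}$. If either $k=n=1$, or $kn$ is odd and $\mathbb{K}=\mathbb{R}$, then the map $P\in\mathcal{P}(^mE;F)\mapsto\Delta^n_kP\in\mathcal{P}(^n\mathcal{P}(^kF);\mathcal{P}(^{mkn}E))$ is injective.
   Context: Banach spaces are over $\mathbb{K}=\mathbb{R}$ or $\mathbb{C}$. $\mathcal{P}(^jX;Y)$ is the space of continuous $j$-homogeneous polynomials $X\to Y$, $\mathcal{P}(^jX)=\mathcal{P}(^jX;\mathbb{K})$. For $P\in\mathcal{P}(^mE;F)$, $\Delta^n_kP\colon\mathcal{P}(^kF)\to\mathcal{P}(^{mnk}E)$ is defined by $\Delta^n_kP(q)(x)=q(P(x))^n$. *)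

From mathcomp Require Import all_boot all_algebra.
From mathcomp Require Import all_classical all_reals all_analysis.
From mathcomp.real_closed Require Export complex.
Import numFieldNormedType.Exports.
Set Implicit Arguments. Unset Strict Implicit. Unset Printing Implicit Defensive.
Import GRing.Theory Num.Theory.
Local Open Scope ring_scope.

(* Algebraic j-linear maps X^j -> Y (X^j encoded as 'I_j -> X):
   additive and homogeneous in each coordinate separately. *)
Definition multilinear (K : numFieldType) (X Y : normedModType K) (j : nat)
    (A : ('I_j -> X) -> Y) : Prop :=
  forall (i : 'I_j) (v : 'I_j -> X) (a : K) (x y : X),
    A (fun l => if l == i then a *: x + y else v l)
    = a *: A (fun l => if l == i then x else v l)
      + A (fun l => if l == i then y else v l).

(* P \in P(^j X; Y): P is continuous and P(x) = A(x,...,x) for some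
   j-linear map A (Mujica's definition). *)
Definition hpoly (K : numFieldType) (X Y : normedModType K) (j : nat)
    (P : X -> Y) : Prop :=
  continuous P /\
  exists A : ('I_j -> X) -> Y, multilinear A /\ forall x, P x = A (fun _ => x).

Definition Delta (K : numFieldType) (E F : normedModType K) (n : nat)
    (P : E -> F) : (F -> K) -> (E -> K) :=
  fun q x => (q (P x)) ^+ n.

(* Injectivity of P |-> Delta^n_k P on P(^m E; F), where Delta^n_k P is
   a map on P(^k F) (two such maps are equal iff they agree on every
   q in P(^k F)). *)
Definition Delta_injective (K : numFieldType) (E F : normedModType K)
    (m n k : nat) : Prop :=
  forall P1 P2 : E -> F, hpoly m P1 -> hpoly m P2 ->
    (forall q : F -> K, hpoly k q -> Delta n P1 q = Delta n P2 q) ->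
    P1 = P2.

From HB Require Import structures.
From mathcomp Require Import all_boot all_order all_algebra.
From mathcomp Require Import all_classical all_reals all_analysis.
From mathcomp.real_closed Require Import complex.
From mathcomp Require Import lra.
Import numFieldNormedType.Exports.
Import Order.TTheory GRing.Theory Num.Theory.
Local Open Scope ring_scope.
Local Open Scope classical_set_scope.

(* If [P1 x != P2 x], the Hahn-Banach theorem gives a continuous linear
   functional [f] on [F] with [f (P1 x - P2 x) != 0].  Then [q := f ^+ k] is a
   k-homogeneous polynomial and [Delta n Pi q x = f (Pi x) ^+ (k * n)].  Over
   the reals with [k * n] odd, and trivially when [k = n = 1], the map
   [t |-> t ^+ (k * n)] is injective, so [f (P1 x) = f (P2 x)]: contradiction.
   Hahn-Banach is proved with Zorn's lemma on graphs of dominated partial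
   functionals; over [C] one applies it to the underlying real space and
   complexifies the resulting [u] into [v |-> u v - i u (i v)]. *)

Section HahnBanach.
Context (R : realType) (V : lmodType R) (p : V -> R).
Hypothesis pD : forall x y, p (x + y) <= p x + p y.
Hypothesis pZ : forall t x, p (t *: x) = `|t| * p x.

Lemma seminorm0 : p 0 = 0.
Proof. by rewrite -(scale0r (0 : V)) pZ normr0 mul0r. Qed.

Lemma seminormN x : p (- x) = p x.
Proof. by rewrite -scaleN1r pZ normrN normr1 mul1r. Qed.

Lemma seminorm_ge0 x : 0 <= p x.
Proof. by have := pD x (- x); rewrite subrr seminorm0 seminormN; lra. Qed.

(* A linear functional on a subspace, dominated by [p], encoded by its graph;
   the subspace is the first projection of the graph. *)
Definition dominated_graph (S : set (V * R)) :=
  [/\ forall x a y b, S (x, a) -> S (y, b) -> S (x + y, a + b),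
      forall t x a, S (x, a) -> S (t *: x, t * a) &
      forall x a, S (x, a) -> a <= p x].

Definition graph_extension (S : set (V * R)) (x0 : V) (c : R) :=
  [set u | exists x a t, S (x, a) /\ u = (x + t *: x0, a + t * c)].

Lemma sub_graph_extension S x0 c : S `<=` graph_extension S x0 c.
Proof. by move=> [x a] Sxa; exists x, a, 0; rewrite scale0r mul0r !addr0. Qed.

Lemma graph_extension_new S x0 c : S (0, 0) -> graph_extension S x0 c (x0, c).
Proof. by exists 0, 0, 1; rewrite scale1r mul1r !add0r. Qed.

Section Graph.
Context {S : set (V * R)} (domS : dominated_graph S).

Lemma dominated_graph_functional {x a b} : S (x, a) -> S (x, b) -> a = b.
Proof.
case: domS => SD SZ Sp Sa Sb.
have := Sp _ _ (SD _ _ _ _ Sa (SZ (-1) _ _ Sb)).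
have := Sp _ _ (SD _ _ _ _ Sb (SZ (-1) _ _ Sa)).
by rewrite scaleN1r subrr seminorm0; lra.
Qed.

Lemma graph_extension_dominated_ge0 x0 c :
    (forall y b, S (y, b) -> c <= p (y + x0) - b) ->
  forall t x a, 0 <= t -> S (x, a) -> a + t * c <= p (x + t *: x0).
Proof.
case: domS => _ SZ Sp cub t x a; rewrite le_eqVlt => /predU1P[<-|t0] Sxa.
  by rewrite mul0r scale0r !addr0; exact: Sp.
have t0' : t != 0 by rewrite gt_eqF.
have := cub _ _ (SZ t^-1 _ _ Sxa).
rewrite -(ler_pM2l t0) mulrBr mulrA mulfV // mul1r -[t in t * p _]gtr0_norm //.
by rewrite -pZ scalerDr scalerA mulfV // scale1r; lra.
Qed.

Lemma dominated_graph_extension x0 c :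
    (forall x a, S (x, a) -> a - p (x - x0) <= c) ->
    (forall y b, S (y, b) -> c <= p (y + x0) - b) ->
  dominated_graph (graph_extension S x0 c).
Proof.
case: (domS) => SD SZ _ clb cub; split.
- move=> _ _ _ _ [x [a [t [Sxa [-> ->]]]]] [y [b [s [Syb [-> ->]]]]].
  exists (x + y), (a + b), (t + s); split; first exact: SD.
  by congr (_, _); rewrite ?scalerDl ?mulrDl addrACA.
- move=> s _ _ [x [a [t [Sxa [-> ->]]]]].
  exists (s *: x), (s * a), (s * t); split; first exact: SZ.
  by rewrite scalerDr scalerA mulrDr mulrA.
- move=> _ _ [x [a [t [Sxa [-> ->]]]]].
  have [t0|t0] := leP 0 t; first exact: graph_extension_dominated_ge0.
  have clb' y b : S (y, b) -> - c <= p (y + - x0) - b.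
    by move=> /clb; lra.
  have := @graph_extension_dominated_ge0 (- x0) (- c) clb' (- t) x a.
  rewrite oppr_ge0 scalerN scaleNr opprK mulrN mulNr opprK.
  by apply; [exact: ltW | exact: Sxa].
Qed.

Lemma dominated_graph_extendable x0 : S (0, 0) ->
  exists c, dominated_graph (graph_extension S x0 c).
Proof.
move=> S00; case: (domS) => SD _ Sp.
have sep x a y b : S (x, a) -> S (y, b) -> a - p (x - x0) <= p (y + x0) - b.
  move=> Sxa Syb; have := Sp _ _ (SD _ _ _ _ Sxa Syb).
  have := pD (x - x0) (y + x0); rewrite addrACA addNr addr0; lra.
pose L := [set r | exists x a, S (x, a) /\ r = a - p (x - x0)].
have supL : has_sup L.
  split; first by exists (0 - p (0 - x0)), 0, 0.
  by exists (p (0 + x0) - 0) => _ [x [a [Sxa ->]]]; exact: sep.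
exists (sup L); apply: dominated_graph_extension => [x a Sxa|y b Syb].
  by apply: sup_upper_bound => //; exists x, a.
by apply: ge_sup; [case: supL | move=> _ [x [a [Sxa ->]]]; exact: sep].
Qed.

End Graph.

Lemma dominated_graph_directed (S : set (V * R)) :
    (forall u v, S u -> S v ->
       exists2 T, dominated_graph T & [/\ T `<=` S, T u & T v]) ->
  dominated_graph S.
Proof.
move=> dirS; split.
- move=> x a y b Sxa Syb; have [T [TD _ _] [TS Txa Tyb]] := dirS _ _ Sxa Syb.
  exact/TS/TD.
- move=> t x a Sxa; have [T [_ TZ _] [TS Txa _]] := dirS _ _ Sxa Sxa.
  exact/TS/TZ.
- by move=> x a Sxa; have [T [_ _ Tp] [_ Txa _]] := dirS _ _ Sxa Sxa; exact: Tp.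
Qed.

Lemma dominated_graph_chain (G : set (V * R)) (F : set (set (V * R))) :
    dominated_graph G -> (forall X, F X -> dominated_graph (G `|` X)) ->
    total_on F subset ->
  dominated_graph (G `|` \bigcup_(X in F) X).
Proof.
move=> domG FP Ftot; apply: dominated_graph_directed.
pose F0 := F `|` [set set0].
have F0P X : F0 X -> dominated_graph (G `|` X).
  by case=> [/FP //|->]; rewrite setU0.
have F0S X : F0 X -> G `|` X `<=` G `|` \bigcup_(X in F) X.
  by case=> [FX|->]; apply: setUS => //; exact: bigcup_sup.
have F0tot : total_on F0 subset.
  move=> X Y [FX|->] [FY|->]; by [exact: Ftot | right | left | left].
have F0mem u : (G `|` \bigcup_(X in F) X) u -> exists2 X, F0 X & (G `|` X) u.
  case=> [Gu|[X FX Xu]]; first by exists set0; [right|left].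
  by exists X; [left|right].
move=> u v /F0mem[X F0X Xu] /F0mem[Y F0Y Yv].
have [XY|YX] := F0tot X Y F0X F0Y.
- exists (G `|` Y); first exact: F0P.
  by split=> //; [exact: F0S | exact: setUS XY _ Xu].
- exists (G `|` X); first exact: F0P.
  by split=> //; [exact: F0S | exact: setUS YX _ Yv].
Qed.

Theorem Hahn_Banach z : exists f : V -> R,
  [/\ forall x y, f (x + y) = f x + f y, forall t x, f (t *: x) = t * f x,
      forall x, `|f x| <= p x & f z = p z].
Proof.
pose G := [set u | exists t, u = (t *: z, t * p z)].
have domG : dominated_graph G.
  split=> [_ _ _ _ [t [-> ->]] [s [-> ->]]|s _ _ [t [-> ->]]|_ _ [t [-> ->]]].
  - by exists (t + s); rewrite scalerDl mulrDl.
  - by exists (s * t); rewrite scalerA mulrA.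
  - by rewrite pZ ler_wpM2r ?seminorm_ge0 ?ler_norm.
(* Zorn's lemma is applied to the [X] with [G `|` X] dominated, rather than
   to the dominated graphs containing [G], because [Zorn_bigcup] also needs
   the union of the empty chain to qualify. *)
have [|A [domH Amax]] := @Zorn_bigcup _ (fun X => dominated_graph (G `|` X)).
  by move=> F FP; exact: dominated_graph_chain.
set H := G `|` A in domH.
have H00 : H (0, 0) by left; exists 0; rewrite scale0r mul0r.
have Htotal x0 : exists c, H (x0, c).
  apply: contrapT => Hx0.
  have [c domE] := dominated_graph_extendable domH x0 H00.
  have HE := @sub_graph_extension H x0 c.
  apply: (Amax (graph_extension H x0 c)).
    split=> [u Au|EA]; first by apply: HE; right.
    by apply: Hx0; exists c; right; apply/EA/graph_extension_new.
  by rewrite (setUidr (subset_trans (@subsetUl _ _ A) HE)).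
have [f Hf] := choice Htotal.
have [HD HZ Hp] := domH.
have fD x y : f (x + y) = f x + f y.
  by apply: (dominated_graph_functional domH (Hf _)); apply: HD.
have fZ t x : f (t *: x) = t * f x.
  by apply: (dominated_graph_functional domH (Hf _)); apply: HZ.
exists f; split=> // [x|].
  rewrite ler_norml (Hp _ _ (Hf x)) andbT lerNl -mulN1r -fZ scaleN1r.
  by rewrite -(seminormN x); apply: Hp.
apply: (dominated_graph_functional domH (Hf _)).
by left; exists 1; rewrite scale1r mul1r.
Qed.

End HahnBanach.

Arguments Hahn_Banach {R V p}.

Local Close Scope classical_set_scope.

Lemma lipschitz_continuous {K : numFieldType} {V W : normedModType K}
    {f : V -> W} {k : K} :
  0 < k -> k.-lipschitz f -> continuous f.
Proof.
move=> k0 fk x; apply/(@cvgrPdist_lt _ _ _ (nbhs x)) => e e0; near=> y.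
rewrite (le_lt_trans (fk (x, y) _)) // -ltr_pdivlMl //.
by near: y; apply: cvgr_dist_lt => //; rewrite mulr_gt0 ?invr_gt0.
Unshelve. all: by end_near. Qed.

Section Functional.
Context {K : numFieldType} {F : normedModType K} {f : F -> K}.
Hypotheses (fD : forall x y, f (x + y) = f x + f y)
  (fZ : forall a x, f (a *: x) = a * f x) (f_cont : continuous f).

Lemma functionalB x y : f (x - y) = f x - f y.
Proof. by rewrite fD -scaleN1r fZ mulN1r. Qed.

Lemma continuous_exprn k : continuous (fun x => f x ^+ k).
Proof.
elim: k => [|k IHk] x; first exact: cst_continuous.
have -> : (fun y => f y ^+ k.+1) = f \* (fun y => f y ^+ k).
  by apply/funext => y; rewrite exprS.
exact: continuousM (f_cont x) (IHk x).
Qed.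

Lemma hpoly_exprn k : hpoly k (fun x => f x ^+ k).
Proof.
split; first exact: continuous_exprn.
exists (fun v => \prod_(l < k) f (v l)); split; last first.
  by move=> x; rewrite prodr_const card_ord.
move=> i v a x y.
have prodD1 w : \prod_(l < k) f (if l == i then w else v l)
    = f w * \prod_(l < k | l != i) f (v l).
  rewrite (bigD1 i) //= eqxx; congr (_ * _).
  by apply: eq_bigr => l /negbTE ->.
by rewrite !prodD1 fD fZ mulrDl -mulrA.
Qed.

End Functional.

Definition dual_separates_points {K : numFieldType} (F : normedModType K) :=
  forall w : F, w != 0 -> exists f : F -> K,
    [/\ forall x y, f (x + y) = f x + f y, forall a x, f (a *: x) = a * f x,
        continuous f & f w != 0].

Lemma Delta_injective_separating (K : numFieldType) (E F : normedModType K)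
    (m n k : nat) :
  dual_separates_points F -> injective (fun a : K => a ^+ (k * n)) ->
  Delta_injective E F m n k.
Proof.
move=> sepF inj_pow P1 P2 _ _ DeltaE; apply/funext => x; apply/eqP.
rewrite -subr_eq0; apply: contraT => /sepF[f [fD fZ f_cont]].
have := congr1 (fun g => g x) (DeltaE _ (hpoly_exprn fD fZ f_cont k)).
rewrite /Delta -!exprM => /inj_pow.
by rewrite functionalB // => ->; rewrite subrr eqxx.
Qed.

Lemma real_dual_separates (R : realType) (F : normedModType R) :
  dual_separates_points F.
Proof.
move=> w w0.
have [f [fD fZ f_le fw]] := Hahn_Banach (@ler_normD _ F) (@normrZ _ F) w.
exists f; split=> //; last by rewrite fw normr_eq0.
apply: (lipschitz_continuous ltr01) => -[x y] _ /=.
by rewrite mul1r -functionalB.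
Qed.

Lemma odd_exprn_inj (R : realDomainType) n :
  odd n -> injective (fun x : R => x ^+ n).
Proof.
move=> n_odd x y /= xy; rewrite [x]numEsg [y]numEsg.
have n_gt0 : (0 < n)%N by case: n n_odd {xy}.
have sgX (z : R) : Num.sg (z ^+ n) = Num.sg z.
  rewrite sgrX; have [->|z0] := eqVneq z 0.
    by rewrite sgr0 expr0n gtn_eqF.
  by rewrite sgr_odd // n_odd expr1.
congr (_ * _); first by rewrite -sgX xy sgX.
by apply/eqP; rewrite -(eqrXn2 n_gt0) // -!normrX xy.
Qed.

Local Open Scope complex_scope.

Section Realification.
Context {R : realType} (F : normedModType R[i]).

Definition realified : Type := F.
HB.instance Definition _ := GRing.Zmodule.on realified.

Definition realified_scale (t : R) (x : realified) : realified :=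
  t%:C *: (x : F).

Lemma realified_scaleA a b v :
  realified_scale a (realified_scale b v) = realified_scale (a * b) v.
Proof. by rewrite /realified_scale scalerA rmorphM. Qed.

Lemma realified_scale1 : left_id 1 realified_scale.
Proof. by move=> v; rewrite /realified_scale rmorph1 scale1r. Qed.

Lemma realified_scaleDr : right_distributive realified_scale +%R.
Proof. by move=> a u v; rewrite /realified_scale scalerDr. Qed.

Lemma realified_scaleDl v : {morph realified_scale^~ v : a b / a + b}.
Proof. by move=> a b; rewrite /realified_scale rmorphD scalerDl. Qed.

HB.instance Definition _ := GRing.Zmodule_isLmodule.Build R realified
  realified_scaleA realified_scale1 realified_scaleDr realified_scaleDl.

End Realification.

Lemma normr_Re {R : rcfType} {F : normedModType R[i]} (v : F) :
  `|v| = (complex.Re `|v|)%:C.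
Proof. by rewrite RRe_real // ger0_real. Qed.

Lemma normc_real (R : rcfType) (r : R) : `|r%:C| = `|r|%:C.
Proof. by rewrite normc_def /= expr0n addr0 sqrtr_sqr. Qed.

Definition complexify {R : realType} {F : normedModType R[i]} (u : F -> R)
  (v : F) : R[i] := u v +i* - u ('i *: v).

Section Complexification.
Context {R : realType} {F : normedModType R[i]} {u : F -> R}.
Hypotheses (uD : forall x y, u (x + y) = u x + u y)
  (uR : forall (t : R) x, u (t%:C *: x) = t * u x).

Lemma complexifyD x y : complexify u (x + y) = complexify u x + complexify u y.
Proof. by rewrite /complexify scalerDr !uD; simpc. Qed.

Lemma complexifyZ c x : complexify u (c *: x) = c * complexify u x.
Proof.
have uN v : u (- v) = - u v.
  by rewrite -[- v]scaleN1r -(rmorphN1 (real_complex R)) uR mulN1r.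
have scale_split (z : R[i]) (v : F) :
    z *: v = (complex.Re z)%:C *: v + (complex.Im z)%:C *: ('i *: v).
  by rewrite {1}(complexE z) scalerDl [_ * (complex.Im z)%:C]mulrC -scalerA.
have ii : 'i *: ('i *: x) = - x by rewrite scalerA -expr2 sqr_i scaleN1r.
rewrite /complexify !scalerA [_ * c]mulrC -scalerA.
rewrite (scale_split c x) (scale_split c ('i *: x)) ii !uD !uR uN.
by case: c => a b /=; simpc.
Qed.

Lemma normr_complexify_le (u_le : forall v, `|u v| <= complex.Re `|v|) v :
  `|complexify u v| <= 2%:R * `|v|.
Proof.
have normi : `|'i : R[i]| = 1 by rewrite normc_def /= expr0n add0r expr1n sqrtr1.
rewrite [complexify u v]complexE mulr2n mulrDl mul1r.
rewrite (le_trans (ler_normD _ _)) //.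
rewrite normrM normi mul1r !normc_real (normr_Re v).
rewrite -!(rmorphD (real_complex R)) lecR /= normrN.
have := u_le ('i *: v); rewrite normrZ normi mul1r.
by have := u_le v; lra.
Qed.

End Complexification.

Lemma complex_dual_separates (R : realType) (F : normedModType R[i]) :
  dual_separates_points F.
Proof.
move=> w w0; pose p (v : realified F) : R := complex.Re `|v : F|.
have pD x y : p (x + y) <= p x + p y.
  have := ler_normD (x : F) y.
  rewrite (normr_Re (x + y : F)) (normr_Re (x : F)) (normr_Re (y : F)).
  by rewrite -rmorphD lecR.
have pZ t x : p (t *: x) = `|t| * p x.
  by rewrite /p normrZ normc_real (normr_Re (x : F)) -rmorphM.
have [u [uD uR u_le uw]] := Hahn_Banach pD pZ w.
have phiD := complexifyD uD; have phiZ := complexifyZ uD uR.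
exists (complexify u); split=> //.
  apply: (lipschitz_continuous (k := 2%:R)) => // -[x y] _ /=.
  by rewrite -(functionalB phiD phiZ); exact: normr_complexify_le.
apply: contraNneq w0 => /(congr1 (@complex.Re R)) /= uw0.
by rewrite -normr_eq0 normr_Re -[complex.Re _]/(p w) -uw uw0.
Qed.

Theorem mainTheorem4 :
  (forall (R : realType) (E F : completeNormedModType R) (m n k : nat),
      (k = 1%N /\ n = 1%N) \/ odd (k * n) ->
      Delta_injective E F m n k)
  /\
  (forall (R : realType) (E F : completeNormedModType R[i]) (m n k : nat),
      k = 1%N /\ n = 1%N ->
      Delta_injective E F m n k).
Proof.
split=> [R E F m n k kn_odd | R E F m n k [-> ->]].
  apply: Delta_injective_separating; first exact: real_dual_separates.
  by apply: odd_exprn_inj; case: kn_odd => [[-> ->]|].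
apply: Delta_injective_separating; first exact: complex_dual_separates.
by move=> a b; rewrite !expr1.
Qed.
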